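(* Let $b$ be a prime, $k\in\mathbb{N}$, and $c:=\mu_1(k)$. Then for every $L\in\mathcal{L}_{\infty,\infty}$, the integer $\ell\in\mathbb{N}$ with $\vec{\ell}=L^\top\vec{k}$ satisfies $\mu_1(\ell)=c$. Moreover, for every $k'\in\mathbb{N}$ with $\mu_1(k')=c$ and every integer $n\ge c$, \[\Pr\left[L^\top\vec{k}=\vec{k}'\;\middle|\;L\in\mathcal{L}_{\infty,n}\right]=\frac{1}{(b-1)b^{c-1}},\] where $L$ is drawn at random from $\mathcal{L}_{\infty,n}$ and $\vec k'$ is identified with its first $n$ digits.
   Context: $\mathbb{F}_b=\{0,\dots,b-1\}$ is the field with $b$ elements. For $k\in\mathbb{N}_0$ with $b$-adic expansion $k=\kappa_0+\kappa_1b+\cdots$, write $\vec{k}=(\kappa_0,\kappa_1,\ldots)^\top\in\mathbb{F}_b^{\mathbb{N}}$. NRT weight: for $k\in\mathbb{N}$ written as $k=\kappa_1b^{c_1-1}+\cdots+\kappa_vb^{c_v-1}$ with $\kappa_i\in\{1,\dots,b-1\}$ and $c_1>\cdots>c_v>0$, $\mu_1(k)=c_1$; $\mu_1(0)=0$. For $w,n\in\mathbb{N}\cup\{\infty\}$, $\mathcal{L}_{w,n}$ is the set of matrices $L=(\ell_{i,j})\in\mathbb{F}_b^{w\times n}$ with $\ell_{i,j}=0$ if $i<j$ and $\ell_{i,j}\neq0$ if $i=j$. A random element of $\mathcal{L}_{w,n}$ is obtained by choosing each entry independently: diagonal entries uniformly from $\mathbb{F}_b\setminus\{0\}$, entries with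 $i>j$ uniformly from $\mathbb{F}_b$, entries with $i<j$ equal to $0$. For $L\in\mathcal{L}_{\infty,n}$, $L^\top\vec k\in\mathbb{F}_b^n$ is the matrix-vector product over $\mathbb{F}_b$ (a finite sum since $\vec k$ has finitely many nonzero entries). *)

From HB Require Import structures.
From mathcomp Require Import all_boot all_order all_algebra.
Set Implicit Arguments. Unset Strict Implicit. Unset Printing Implicit Defensive.
Import GRing.Theory.
Local Open Scope ring_scope.

Definition digit (b k i : nat) : nat := ((k %/ b ^ i) %% b)%N.

Definition kvec (b k : nat) (i : nat) : 'F_b := (digit b k i)%:R.

(* NRT weight mu_1(k): (position of highest nonzero digit) + 1, and 0 for k = 0.
   All nonzero digits of k sit at positions i < k (since b^k > k for b >= 2). *)
Definition mu1 (b k : nat) : nat := (\max_(i < k | digit b k i != 0%N) i.+1)%N.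

Definition inLinfinf (b : nat) (L : nat -> nat -> 'F_b) : Prop :=
  forall i j : nat, ((i < j)%N -> L i j = 0) /\ (i = j -> L i j != 0).

(* (L^T vec k)_j = sum_i L_{i,j} kappa_i ; the sum is finite since kappa_i = 0 for i >= k *)
Definition LTk_inf (b : nat) (L : nat -> nat -> 'F_b) (k : nat) (j : nat) : 'F_b :=
  \sum_(i < k) L i j * kvec b k i.

Definition inLfin (b w n : nat) (L : 'M['F_b]_(w, n)) : bool :=
  [forall i : 'I_w, forall j : 'I_n,
     ((i < j)%N ==> (L i j == 0)) && ((nat_of_ord i == nat_of_ord j) ==> (L i j != 0))].

Definition LTk_fin (b w n : nat) (L : 'M['F_b]_(w, n)) (k : nat) (j : 'I_n) : 'F_b :=
  \sum_(i < w) L i j * kvec b k i.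

Definition prob_LTk (b w n k k' : nat) : rat :=
  (#|[set L : 'M['F_b]_(w, n) | inLfin L && [forall j : 'I_n, LTk_fin L k j == kvec b k' j]]|%:R
   / #|[set L : 'M['F_b]_(w, n) | inLfin L]|%:R).

From HB Require Import structures.
From mathcomp Require Import all_boot all_order all_algebra.
Import GRing.Theory Num.Theory.
Set Implicit Arguments. Unset Strict Implicit. Unset Printing Implicit Defensive.
Local Open Scope ring_scope.

(* Write c = d + 1. As L is lower triangular and the digits of k vanish above d,
   coordinate j of L^T k vanishes for j > d, while coordinate d equals
   L_{d,d} kappa_d != 0; so L^T k again has weight c.
   For the probability, the map M |-> L^T k sends L_{w,n} into the
   (b - 1) b^d vectors of weight c, and all its fibres have the same size:
   adding (v' - v) / kappa_d to row d of M (in the columns j <= d) keeps M in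
   L_{w,n} and moves the fibre of v injectively into the fibre of v'. *)

Section Digits.
Variable b : nat.
Hypothesis b_gt1 : (1 < b)%N.

Let b_gt0 : (0 < b)%N. Proof. exact: ltnW. Qed.

Lemma digit_lt m i : (digit b m i < b)%N.
Proof. by rewrite ltn_mod. Qed.

Lemma digit_eq0_ge m i : (m <= i)%N -> digit b m i = 0%N.
Proof.
by move=> le_mi; rewrite /digit divn_small ?mod0n // (leq_ltn_trans le_mi) // ltn_expl.
Qed.

Lemma digit_neq0_lt m i : digit b m i != 0%N -> (i < m)%N.
Proof. by apply: contraR; rewrite -leqNgt => /digit_eq0_ge ->. Qed.

Lemma leq_mu1 m i : digit b m i != 0%N -> (i < mu1 b m)%N.
Proof.
move=> nz_i.
exact: (@leq_bigmax_cond _ (fun j : 'I_m => digit b m j != 0%N)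
          (fun j : 'I_m => (nat_of_ord j).+1) (Ordinal (digit_neq0_lt nz_i))).
Qed.

Lemma digit_eq0_mu1 m i : (mu1 b m <= i)%N -> digit b m i = 0%N.
Proof. by move=> le_mu_i; apply/eqP; apply: contraLR le_mu_i => /leq_mu1; rewrite -ltnNge. Qed.

Lemma mu1_top m d :
  digit b m d != 0%N -> (forall i, (d < i)%N -> digit b m i = 0%N) -> mu1 b m = d.+1.
Proof.
move=> nz_d above_d; apply/eqP; rewrite eqn_leq leq_mu1 // andbT.
by apply/bigmax_leqP => i; apply: contraR; rewrite -ltnNge => /above_d ->.
Qed.

Lemma mu1_spec m : (0 < m)%N -> exists2 d, mu1 b m = d.+1 & digit b m d != 0%N.
Proof.
move=> m_gt0; have [t m_ge m_lt] : exists2 t, (b ^ t <= m)%N & (m < b ^ t.+1)%N.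
  by exists (trunc_log b m); [apply: trunc_logP | apply: trunc_log_ltn].
have nz_t : digit b m t != 0%N.
  rewrite /digit modn_small -?lt0n ?divn_gt0 ?expn_gt0 ?b_gt0 //.
  by rewrite ltn_divLR ?expn_gt0 ?b_gt0 // -expnS.
have nonempty : (0 < #|(fun j : 'I_m => digit b m j != 0%N)|)%N.
  by apply/card_gt0P; exists (Ordinal (digit_neq0_lt nz_t)).
have [i nz_i mu1_i] := eq_bigmax_cond (fun j : 'I_m => (nat_of_ord j).+1) nonempty.
by exists i; rewrite // -mu1_i.
Qed.

Lemma digit_sum N (f : nat -> nat) i : (forall j, (f j < b)%N) ->
  digit b (\sum_(j < N) f j * b ^ j)%N i = if (i < N)%N then f i else 0%N.
Proof.
elim: N f i => [|N IH] f i f_lt; first by rewrite big_ord0 /digit div0n mod0n.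
rewrite big_ord_recl expn0 muln1.
under eq_bigr => j _ do rewrite expnSr mulnA.
rewrite -big_distrl /=; case: i => [|i].
  by rewrite /digit expn0 divn1 addnC modnMDl modn_small.
rewrite /digit expnS divnMA addnC divnMDl // (divn_small (f_lt 0%N)) addn0.
by rewrite -/(digit b _ i) (IH (fun j => f j.+1)).
Qed.

End Digits.

Section PrimeField.
Variable b : nat.
Hypothesis b_prime : prime b.

Let b_gt1 : (1 < b)%N. Proof. exact: prime_gt1. Qed.

Lemma Fp_val_lt (x : 'F_b) : (val x < b)%N.
Proof. by case: x => /= x; rewrite Fp_cast. Qed.

Lemma Fp_natr_val (x : 'F_b) : (val x)%:R = x.
Proof. by apply: val_inj; rewrite /= val_Fp_nat // modn_small ?Fp_val_lt. Qed.

Lemma kvec_eq0 m i : (kvec b m i == 0) = (digit b m i == 0%N).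
Proof. by rewrite /kvec -val_eqE /= val_Fp_nat // modn_small ?digit_lt. Qed.

Lemma kvec_sum N (v : nat -> 'F_b) j :
  kvec b (\sum_(i < N) val (v i) * b ^ i)%N j = if (j < N)%N then v j else 0.
Proof.
rewrite /kvec (@digit_sum b b_gt1 _ (fun i => val (v i))) => [|i]; last exact: Fp_val_lt.
by case: ifP; rewrite ?Fp_natr_val.
Qed.

Lemma mu1S_digit m d : mu1 b m = d.+1 -> digit b m d != 0%N.
Proof.
case: (posnP m) => [-> | m_gt0 mu1_m]; first by rewrite /mu1 big_ord0.
by have [d' mu1_d' nz_d'] := mu1_spec b_gt1 m_gt0; move: mu1_m; rewrite mu1_d' => -[<-].
Qed.

Lemma kvec_mu1_top m d : mu1 b m = d.+1 -> kvec b m d != 0.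
Proof. by move/mu1S_digit; rewrite kvec_eq0. Qed.

Lemma kvec_mu1_high m d i : mu1 b m = d.+1 -> (d < i)%N -> kvec b m i = 0.
Proof. by move=> mu1_m lt_di; apply/eqP; rewrite kvec_eq0 digit_eq0_mu1 ?mu1_m. Qed.

Lemma mu1_kvec m d :
  kvec b m d != 0 -> (forall i, (d < i)%N -> kvec b m i = 0) -> mu1 b m = d.+1.
Proof.
rewrite kvec_eq0 => nz_d above_d; apply: mu1_top => // i /above_d /eqP.
by rewrite kvec_eq0 => /eqP.
Qed.

End PrimeField.

Section SupportedSums.
Variables (R : pzRingType) (N : nat) (a : 'I_N -> R) (x : nat -> R).

Lemma sum_mul_eq0_supp j c : (forall i : 'I_N, (i < j)%N -> a i = 0) ->
  (forall i, (c <= i)%N -> x i = 0) -> (c <= j)%N -> \sum_(i < N) a i * x i = 0.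
Proof.
move=> a_low x_high le_cj; apply: big1 => i _.
have [/a_low -> | le_ji] := ltnP i j; first by rewrite mul0r.
by rewrite x_high ?mulr0 // (leq_trans le_cj).
Qed.

Lemma sum_mul_eq_pivot (d : 'I_N) : (forall i : 'I_N, (i < d)%N -> a i = 0) ->
  (forall i, (d < i)%N -> x i = 0) -> \sum_(i < N) a i * x i = a d * x d.
Proof.
move=> a_low x_high; rewrite (bigD1 d) //= big1 ?addr0 // => i ne_id.
have [/a_low -> | /x_high -> | eq_id] := ltngtP i d; rewrite ?mul0r ?mulr0 //.
by move: ne_id; rewrite -val_eqE /= eq_id eqxx.
Qed.

End SupportedSums.

Lemma card_uniform_fibres (T U : finType) (P : pred T) (B : {pred U}) (f : T -> U) u0 :
  (forall x, P x -> f x \in B) ->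
  {in B, forall u, #|[set x | P x && (f x == u)]| = #|[set x | P x && (f x == u0)]|} ->
  #|[set x | P x]| = (#|B| * #|[set x | P x && (f x == u0)]|)%N.
Proof.
move=> f_B fibres; rewrite -sum1dep_card (partition_big f (mem B)) // -sum_nat_const.
by apply: eq_bigr => u B_u; rewrite sum1dep_card fibres.
Qed.

Lemma inLfin_id b w n : inLfin (\matrix_(i < w, j < n) (i == j :> nat)%:R : 'M['F_b]_(w, n)).
Proof.
apply/forallP => i; apply/forallP => j; rewrite !mxE.
by apply/andP; split; apply/implyP; [move/ltn_eqF -> | move ->; rewrite oner_neq0].
Qed.

Section Transform.
Variables (b : nat) (k d : nat).
Hypothesis b_prime : prime b.
Hypothesis mu1_k : mu1 b k = d.+1.

Let kvec_k_top : kvec b k d != 0. Proof. exact: (kvec_mu1_top b_prime mu1_k). Qed.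
Let kvec_k_high i : (d < i)%N -> kvec b k i = 0.
Proof. exact: (kvec_mu1_high b_prime mu1_k). Qed.
Let d_lt_k : (d < k)%N.
Proof. exact: digit_neq0_lt (prime_gt1 b_prime) _ _ (mu1S_digit b_prime mu1_k). Qed.

Section Infinite.
Variable L : nat -> nat -> 'F_b.
Hypothesis L_tri : inLinfinf L.

Lemma LTk_inf_high j : (d < j)%N -> LTk_inf L k j = 0.
Proof.
apply: (sum_mul_eq0_supp (a := fun i : 'I_k => L i j)) => // i; exact: (proj1 (L_tri _ _)).
Qed.

Lemma LTk_inf_top : LTk_inf L k d = L d d * kvec b k d.
Proof.
apply: (sum_mul_eq_pivot (a := fun i : 'I_k => L i d) (d := Ordinal d_lt_k)) => // i.
exact: (proj1 (L_tri _ _)).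
Qed.

Lemma LTk_inf_kvec : exists l, forall j, kvec b l j = LTk_inf L k j.
Proof.
exists (\sum_(i < k) val (LTk_inf L k i) * b ^ i)%N => j.
rewrite kvec_sum //; case: ltnP => // le_kj.
by rewrite LTk_inf_high // (leq_trans d_lt_k).
Qed.

Lemma mu1_LTk_inf l : (forall j, kvec b l j = LTk_inf L k j) -> mu1 b l = d.+1.
Proof.
move=> l_eq; apply: (mu1_kvec b_prime) => [|i lt_di]; last by rewrite l_eq LTk_inf_high.
by rewrite l_eq LTk_inf_top mulf_neq0 // (proj2 (L_tri _ _)).
Qed.

End Infinite.

Section Finite.
Variables w n : nat.
Hypothesis d_lt_n : (d < n)%N.
Hypothesis n_le_w : (n <= w)%N.

Let dn : 'I_n := Ordinal d_lt_n.
Let dw : 'I_w := Ordinal (leq_trans d_lt_n n_le_w).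

Definition lower_triangular (M : 'M['F_b]_(w, n)) :=
  forall (i : 'I_w) (j : 'I_n), (i < j)%N -> M i j = 0.

Lemma inLfinP (M : 'M['F_b]_(w, n)) :
  reflect (lower_triangular M /\ forall (i : 'I_w) (j : 'I_n), i = j :> nat -> M i j != 0)
          (inLfin M).
Proof.
apply: (iffP forallP) => [M_tri | [M_low M_diag] i].
  split=> i j; have /forallP/(_ j)/andP[/implyP M_ij /implyP M_ii] := M_tri i.
    by move/M_ij/eqP.
  by move/eqP/M_ii.
apply/forallP=> j; apply/andP; split; apply/implyP; first by move/M_low ->.
by move/eqP/M_diag.
Qed.

Lemma LTk_fin_high M (j : 'I_n) : lower_triangular M -> (d < j)%N -> LTk_fin M k j = 0.
Proof.
by move=> M_low; apply: (sum_mul_eq0_supp (a := fun i => M i j)) => // i; apply: M_low i j.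
Qed.

Lemma LTk_fin_top M : lower_triangular M -> LTk_fin M k dn = M dw dn * kvec b k d.
Proof.
move=> M_low; apply: (sum_mul_eq_pivot (a := fun i => M i dn) (d := dw)) => // i.
exact: M_low i dn.
Qed.

Lemma LTk_finD (A B : 'M['F_b]_(w, n)) j :
  LTk_fin (A + B) k j = LTk_fin A k j + LTk_fin B k j.
Proof. by rewrite /LTk_fin -big_split; apply: eq_bigr => i _; rewrite mxE mulrDl. Qed.

Definition LTk_vec (M : 'M['F_b]_(w, n)) : {ffun 'I_n -> 'F_b} := [ffun j => LTk_fin M k j].

Definition mu1_slot (j : 'I_n) : pred 'F_b :=
  if (j < d)%N then predT else if j == d :> nat then predC1 0 else pred1 0.

Lemma mu1_familyP (v : {ffun 'I_n -> 'F_b}) :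
  v dn != 0 -> (forall j : 'I_n, (d < j)%N -> v j = 0) -> v \in family mu1_slot.
Proof.
move=> v_top v_high; apply/familyP => j; rewrite /mu1_slot.
case: ltngtP => [// | /v_high /= -> // | eq_jd].
by have -> : j = dn by apply: val_inj.
Qed.

Lemma mu1_family_top v : v \in family mu1_slot -> v dn != 0.
Proof. by move/familyP/(_ dn); rewrite /mu1_slot ltnn eqxx. Qed.

Lemma mu1_family_high v (j : 'I_n) : v \in family mu1_slot -> (d < j)%N -> v j = 0.
Proof.
move/familyP/(_ j) => + lt_dj; rewrite /mu1_slot ltnNge ltnW // gtn_eqF //.
by move/eqP.
Qed.

Lemma kvec_mu1_family m :
  mu1 b m = d.+1 -> [ffun j : 'I_n => kvec b m j] \in family mu1_slot.
Proof.
move=> mu1_m; apply: mu1_familyP => [|j lt_dj]; rewrite ffunE.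
  exact: (kvec_mu1_top b_prime mu1_m).
exact: (kvec_mu1_high b_prime mu1_m).
Qed.

Lemma LTk_vec_mu1_family M : inLfin M -> LTk_vec M \in family mu1_slot.
Proof.
case/inLfinP => M_low M_diag; apply: mu1_familyP => [|j lt_dj]; rewrite ffunE.
  by rewrite LTk_fin_top // mulf_neq0 // M_diag.
exact: LTk_fin_high.
Qed.

Definition shift_mx (v v' : {ffun 'I_n -> 'F_b}) : 'M['F_b]_(w, n) :=
  \matrix_(i, j) if (i == d :> nat) && (j <= d)%N then (v' j - v j) / kvec b k d else 0.

Lemma LTk_fin_shift v v' j :
  LTk_fin (shift_mx v v') k j = if (j <= d)%N then v' j - v j else 0.
Proof.
rewrite /LTk_fin (bigD1 dw) //= big1 ?addr0 => [|i ne_id]; last first.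
  by move: ne_id; rewrite mxE -val_eqE /= => /negbTE ->; rewrite mul0r.
by rewrite mxE eqxx /=; case: ifP; rewrite ?mul0r // divfK.
Qed.

Definition LTk_fibre v := [set M : 'M['F_b]_(w, n) | inLfin M && (LTk_vec M == v)].

Lemma shift_mx_fibre v v' M : v \in family mu1_slot -> v' \in family mu1_slot ->
  M \in LTk_fibre v -> M + shift_mx v v' \in LTk_fibre v'.
Proof.
move=> v_mu1 v'_mu1; rewrite !inE => /andP[/inLfinP[M_low M_diag] /eqP M_v].
have LTk_vec_shift : LTk_vec (M + shift_mx v v') = v'.
  apply/ffunP => j; rewrite !ffunE LTk_finD LTk_fin_shift -M_v ffunE.
  case: leqP => [_ | lt_dj]; first by rewrite addrC subrK.
  by rewrite addr0 LTk_fin_high // mu1_family_high.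
have shift_low : lower_triangular (M + shift_mx v v').
  move=> i j lt_ij; rewrite !mxE M_low // add0r.
  by case: eqP => //= eq_id; rewrite leqNgt -eq_id lt_ij.
rewrite LTk_vec_shift eqxx andbT; apply/inLfinP; split=> // i j eq_ij.
have [eq_id | ne_id] := eqVneq (i : nat) d; last by rewrite !mxE (negbTE ne_id) addr0 M_diag.
have -> : i = dw by apply: val_inj.
have -> : j = dn by apply: val_inj; rewrite /= -eq_ij.
apply: contra_neq (mu1_family_top v'_mu1) => top_eq0.
by rewrite -LTk_vec_shift ffunE LTk_fin_top // top_eq0 mul0r.
Qed.

Lemma card_LTk_fibre v v' : v \in family mu1_slot -> v' \in family mu1_slot ->
  #|LTk_fibre v| = #|LTk_fibre v'|.
Proof.
suff card_le u u' : u \in family mu1_slot -> u' \in family mu1_slot ->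
    (#|LTk_fibre u| <= #|LTk_fibre u'|)%N.
  by move=> v_mu1 v'_mu1; apply/eqP; rewrite eqn_leq !card_le.
move=> u_mu1 u'_mu1; rewrite -(card_imset _ (addIr (shift_mx u u'))).
by apply/subset_leq_card/subsetP => _ /imsetP[M M_u ->]; apply: shift_mx_fibre.
Qed.

Lemma card_mu1_family : #|family mu1_slot| = ((b - 1) * b ^ d)%N.
Proof.
pose g j := if (j < d)%N then b else if j == d then (b - 1)%N else 1%N.
have card_slot (j : 'I_n) : #|mu1_slot j| = g j.
  rewrite /mu1_slot /g; case: ifP => _.
    by rewrite -[RHS](card_Fp b_prime); apply: eq_card.
  case: ifP => _; last by rewrite card1.
  by rewrite cardC1 card_Fp // subn1.
rewrite card_family foldrE big_map big_enum /= (eq_bigr _ (fun j _ => card_slot j)).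
have low : (\prod_(0 <= i < d) g i = b ^ d)%N.
  rewrite -{2}(subn0 d) -prod_nat_const_nat.
  by apply: eq_big_nat => i /andP[_ lt_id]; rewrite /g lt_id.
have high : (\prod_(d <= i < n) g i = b - 1)%N.
  rewrite big_ltn // big_nat_cond big1 => [|i /andP[/andP[lt_di _] _]].
    by rewrite /g ltnn eqxx muln1.
  by rewrite /g ltnNge ltnW // gtn_eqF.
by rewrite -(big_mkord xpredT g) (@big_cat_nat _ _ _ d 0 n) ?(ltnW d_lt_n) // low high mulnC.
Qed.

Lemma prob_LTk_mu1 k' :
  mu1 b k' = d.+1 -> prob_LTk b w n k k' = (((b - 1) * b ^ d)%N%:R)^-1.
Proof.
move=> mu1_k'; set v' := [ffun j : 'I_n => kvec b k' j].
have v'_mu1 : v' \in family mu1_slot by exact: kvec_mu1_family.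
rewrite /prob_LTk.
have -> : [set M : 'M['F_b]_(w, n) | inLfin M && [forall j, LTk_fin M k j == kvec b k' j]]
          = LTk_fibre v'.
  apply/setP => M; rewrite !inE; congr andb; apply/forallP/eqP => [M_k' | /ffunP M_v' j].
    by apply/ffunP => j; rewrite !ffunE; apply/eqP.
  by have := M_v' j; rewrite !ffunE => ->.
have card_Lfin := card_uniform_fibres LTk_vec_mu1_family
  (fun v v_mu1 => card_LTk_fibre v_mu1 v'_mu1).
have Lfin_gt0 : (0 < #|[set M : 'M['F_b]_(w, n) | inLfin M]|)%N.
  by apply/card_gt0P; exists (\matrix_(i, j) (i == j :> nat)%:R); rewrite inE inLfin_id.
rewrite card_Lfin card_mu1_family natrM invfM mulrCA mulfV ?mulr1 //.
by move: Lfin_gt0; rewrite card_Lfin muln_gt0 pnatr_eq0 -lt0n => /andP[].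
Qed.

End Finite.
End Transform.

Theorem lemma2p13 (b : nat) (hb : prime b) (k : nat) (hk : (0 < k)%N) :
  let c := mu1 b k in
  (forall L : nat -> nat -> 'F_b, inLinfinf L ->
     (exists l : nat, forall j, kvec b l j = LTk_inf L k j) /\
     (forall l : nat, (forall j, kvec b l j = LTk_inf L k j) -> mu1 b l = c)) /\
  (forall (k' n w : nat), (0 < k')%N -> mu1 b k' = c -> (c <= n)%N -> (n <= w)%N ->
     prob_LTk b w n k k' = (((b - 1) * b ^ (c - 1))%N%:R)^-1).
Proof.
move=> c; have [d mu1_k _] := mu1_spec (prime_gt1 hb) hk.
rewrite /c mu1_k subSS subn0; split=> [L L_tri | k' n w _ mu1_k' d_lt_n n_le_w].
  exact: (conj (LTk_inf_kvec hb mu1_k L_tri) (@mu1_LTk_inf _ _ _ hb mu1_k _ L_tri)).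
exact: (prob_LTk_mu1 hb mu1_k d_lt_n n_le_w mu1_k').
Qed.
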